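(* In the simplicial setting, an $\mathcal I$-space $X$ is flat if and only if (a) each morphism $\mathbf m\to\mathbf n$ of $\mathcal I$ induces a cofibration (injection) $X(\mathbf m)\to X(\mathbf n)$, and (b) for all $l,m,n\ge0$, in the commutative square with corners $X(\mathbf m)$, $X(\mathbf m\sqcup\mathbf n)$, $X(\mathbf l\sqcup\mathbf m)$, $X(\mathbf l\sqcup\mathbf m\sqcup\mathbf n)$ and maps induced by the evident order-preserving inclusions, the intersection of the images of $X(\mathbf l\sqcup\mathbf m)$ and $X(\mathbf m\sqcup\mathbf n)$ in $X(\mathbf l\sqcup\mathbf m\sqcup\mathbf n)$ equals the image of $X(\mathbf m)$.
   Context: $\mathcal I$ is the category with objects the finite sets $\mathbf n=\{1,\dots,n\}$, $n\ge0$, and morphisms the injective maps; $\mathbf m\sqcup\mathbf n$ denotes ordered concatenation. An $\mathcal I$-space is a functor from $\mathcal I$ to simplicial sets. For an object $\mathbf n$, let $\partial(\mathcal I\downarrow\mathbf n)$ be the full subcategory of the comma category $(\mathcal I\downarrow\mathbf n)$ on the objects $\mathbf m\to\mathbf n$ that are not isomorphisms; the latching space is $L_{\mathbf n}(X)=\operatorname{colim}_{\partial(\mathcal I\downarrow\mathbf n)}X$ (via the forgetful functor to $\mathcal I$). A map $X\to Y$ is a flat cofibration if $X(\mathbf n)\cup_{L_{\mathbf n}(X)}L_{\mathbf n}(Y)\to Y(\mathbf n)$ is a cofibration for all $\mathbf n$. An $\mathcal I$-space $X$ is flat if $\emptyset\to X$ is a flat cofibration, i.e. $L_{\mathbf n}(X)\to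 X(\mathbf n)$ is a cofibration for all $\mathbf n$. *)

From mathcomp Require Import all_boot.
From Stdlib Require Import Relations.
Set Implicit Arguments. Unset Strict Implicit. Unset Printing Implicit Defensive.

(* Morphisms of the simplex category Delta: [k] -> [l] are monotone maps
   {0..k} -> {0..l}, i.e. 'I_k.+1 -> 'I_l.+1. *)
Record dmor (k l : nat) := DMor {
  dfun :> 'I_k.+1 -> 'I_l.+1;
  dmono : forall i j : 'I_k.+1, i <= j -> dfun i <= dfun j }.

(* Morphisms of the category I : injective maps n -> m, with n = 'I_n. *)
Record imor (m n : nat) := IMor {
  ifun :> 'I_m -> 'I_n;
  iinj : injective ifun }.

(* An I-space: a functor from I to simplicial sets.
   Xo n k = set of k-simplices of the simplicial set X(n);
   Xs a   = simplicial operator a^* : X(n)_l -> X(n)_k for a : [k] -> [l];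
   Xi f   = f_* : X(m)_k -> X(n)_k for f : m -> n in I.
   Functoriality and identity laws are stated extensionally on the
   underlying maps; Xi f is a map of simplicial sets (naturality). *)
Record Ispace := {
  Xo : nat -> nat -> Type;
  Xs : forall n k l, dmor k l -> Xo n l -> Xo n k;
  Xi : forall m n k, imor m n -> Xo m k -> Xo n k;
  Xs_id : forall n k (a : dmor k k) (x : Xo n k),
      (forall i, a i = i) -> Xs a x = x;
  Xs_comp : forall n k l p (a : dmor k l) (b : dmor l p) (c : dmor k p)
      (x : Xo n p), (forall i, c i = b (a i)) -> Xs c x = Xs a (Xs b x);
  Xi_id : forall n k (f : imor n n) (x : Xo n k),
      (forall i, f i = i) -> Xi f x = x;
  Xi_comp : forall m n p k (f : imor m n) (g : imor n p) (h : imor m p)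
      (x : Xo m k), (forall i, h i = g (f i)) -> Xi h x = Xi g (Xi f x);
  Xi_Xs : forall m n k l (f : imor m n) (a : dmor k l) (x : Xo m l),
      Xi f (Xs a x) = Xs a (Xi f x) }.

Arguments Xs i {n k l} _ _.
Arguments Xi i {m n k} _ _.

(* Latching space L_n(X), at simplicial level k: colimit (computed levelwise,
   in Set) of X over the full subcategory of (I | n) on the non-isomorphisms
   f : m -> n.  Elements of the disjoint union: *)
Record latch_elt (X : Ispace) (n k : nat) := LE {
  le_m : nat;
  le_f : imor le_m n;
  le_nonIso : ~ bijective le_f;
  le_x : Xo X le_m k }.

(* Generating relation of the colimit: (f o h, x) ~ (f, h_* x) for a
   morphism h : (m, f o h) -> (m', f) of the comma category. *)
Definition latch_rel (X : Ispace) n k (a b : latch_elt X n k) : Prop :=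
  exists h : imor (le_m a) (le_m b),
    (forall i, le_f b (h i) = le_f a i) /\ le_x b = Xi X h (le_x a).

Definition latch_map (X : Ispace) n k (a : latch_elt X n k) : Xo X n k :=
  Xi X (le_f a) (le_x a).

(* Cofibrations of simplicial sets are the monomorphisms (levelwise
   injections).  X is flat iff L_n(X) -> X(n) is injective in each level,
   i.e. representatives with equal image are identified in the colimit
   (the equivalence relation generated by latch_rel). *)
Definition flat (X : Ispace) : Prop :=
  forall n k (a b : latch_elt X n k),
    latch_map a = latch_map b ->
    clos_refl_sym_trans _ (@latch_rel X n k) a b.

Definition incl_l (m n : nat) : imor m (m + n) := IMor (@lshift_inj m n).
Definition incl_r (l m : nat) : imor m (l + m) := IMor (@rshift_inj l m).

Lemma incl_lr_inj (l m n : nat) :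
  injective (fun i : 'I_(m + n) => cast_ord (addnA l m n) (rshift l i)).
Proof. by move=> x y /cast_ord_inj /rshift_inj. Qed.

(* m ⊔ n -> l ⊔ m ⊔ n, i |-> l + i  (target written (l + m) + n). *)
Definition incl_lr (l m n : nat) : imor (m + n) (l + m + n) :=
  IMor (@incl_lr_inj l m n).

From mathcomp Require Import all_boot.
From Stdlib Require Import Relations Classical.
Set Implicit Arguments. Unset Strict Implicit. Unset Printing Implicit Defensive.

(* Both conditions are equivalent to an amalgamation property: two simplices
   [y1 : X(p1)], [y2 : X(p2)] with the same image in [X(n)] come from a common
   simplex of [X(q)] along maps [q -> p1], [q -> p2] that agree in [n].
   Flatness gives amalgamation by induction on [n], since an equality in [X(n)]
   between images from non-isomorphisms is witnessed by a zigzag in the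
   latching colimit passing only through smaller objects; conversely an
   amalgam is a common predecessor of two latching representatives.  For the
   square condition, split the union of the images of [p1] and [p2] in [n] as
   (only p1) ⊔ (both) ⊔ (only p2): the pair of maps becomes, up to
   reindexing, the pair [l ⊔ m -> l ⊔ m ⊔ n <- m ⊔ n], whose amalgam is
   exactly what (b) provides, and (a) lets us cancel the reindexings. *)

Definition imor_id n : imor n n := IMor (@inj_id 'I_n).

Definition imor_comp m n p (g : imor n p) (f : imor m n) : imor m p :=
  IMor (inj_comp (@iinj _ _ g) (@iinj _ _ f)).

Lemma ltn_nonbij_imor m n (f : imor m n) : ~ bijective f -> m < n.
Proof.
move=> nbij; have := leq_card f (@iinj _ _ f); rewrite !card_ord leq_eqVlt.
case/orP=> [/eqP Emn | //]; subst n; case: (nbij (injF_bij (@iinj _ _ f))).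
Qed.

Lemma ltn_nonbij m n (f : 'I_m -> 'I_n) : m < n -> ~ bijective f.
Proof.
move=> lt_mn [g _ gK]; have := leq_card g (can_inj gK).
by rewrite !card_ord leqNgt lt_mn.
Qed.

Lemma incl_lr_incl_l l m n (j : 'I_m) :
  incl_lr l m n (incl_l m n j) = incl_l (l + m) n (incl_r l m j).
Proof. exact: val_inj. Qed.

Lemma incl_r_factor l m n q (u1 : imor q (l + m)) (u2 : imor q (m + n)) :
  (forall i, incl_l (l + m) n (u1 i) = incl_lr l m n (u2 i)) ->
  exists w : imor q m, forall i, incl_r l m (w i) = u1 i.
Proof.
move=> Eu; have Eval i : val (u1 i) = l + val (u2 i) := congr1 val (Eu i).
have w_lt i : val (u2 i) < m by have := ltn_ord (u1 i); rewrite Eval ltn_add2l.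
have w_inj : injective (fun i => Ordinal (w_lt i)).
  by move=> i j /(congr1 val) /= /val_inj /(@iinj _ _ u2).
by exists (IMor w_inj) => i; apply: val_inj; rewrite /= Eval.
Qed.

Section ImagePartition.

Variables (m m' n : nat) (f : 'I_m -> 'I_n) (g : 'I_m' -> 'I_n).

Definition imfDg := [seq k <- enum 'I_n | (k \in codom f) && (k \notin codom g)].
Definition imfIg := [seq k <- enum 'I_n | (k \in codom f) && (k \in codom g)].
Definition imgDf := [seq k <- enum 'I_n | (k \notin codom f) && (k \in codom g)].
Definition imfUg := imfDg ++ imfIg ++ imgDf.

Local Notation a := (size imfDg).
Local Notation b := (size imfIg).
Local Notation c := (size imgDf).

Lemma mem_imfDg k : (k \in imfDg) = (k \in codom f) && (k \notin codom g).
Proof. by rewrite mem_filter mem_enum andbT. Qed.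

Lemma mem_imfIg k : (k \in imfIg) = (k \in codom f) && (k \in codom g).
Proof. by rewrite mem_filter mem_enum andbT. Qed.

Lemma mem_imgDf k : (k \in imgDf) = (k \notin codom f) && (k \in codom g).
Proof. by rewrite mem_filter mem_enum andbT. Qed.

Lemma uniq_imfUg : uniq imfUg.
Proof.
have uniq_part (P : pred 'I_n) : uniq [seq k <- enum 'I_n | P k].
  exact/filter_uniq/enum_uniq.
rewrite !cat_uniq !uniq_part /= !andbT; apply/andP; split; apply/hasPn => k;
  rewrite ?mem_cat ?mem_imfDg mem_imfIg mem_imgDf;
  by case: (k \in codom f); case: (k \in codom g).
Qed.

Lemma size_imfUg : size imfUg == a + b + c.
Proof. by rewrite !size_cat addnA. Qed.

Definition imfUg_enum (k : 'I_(a + b + c)) : 'I_n := tnth (Tuple size_imfUg) k.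

Lemma imfUg_enum_inj : injective imfUg_enum.
Proof. exact/tuple_uniqP/uniq_imfUg. Qed.

Lemma imfUg_enum_index (k : 'I_(a + b + c)) x :
  x \in imfUg -> k = index x imfUg :> nat -> imfUg_enum k = x.
Proof. by move=> x_in Ek; rewrite /imfUg_enum (tnth_nth x) Ek nth_index. Qed.

Lemma imfUg_enum_imfIg (j : 'I_b) :
  imfUg_enum (incl_l (a + b) c (incl_r a b j)) = tnth (in_tuple imfIg) j.
Proof.
pose x0 := tnth (in_tuple imfIg) j.
rewrite /imfUg_enum (tnth_nth x0) [RHS](tnth_nth x0) [nth _ imfUg _]nth_cat.
by rewrite ltnNge leq_addr addKn nth_cat ltn_ord.
Qed.

Lemma coordf_subproof i : index (f i) imfUg < a + b.
Proof.
rewrite index_cat; case: ifP => [fi_in | /negbT].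
  by rewrite ltn_addr // index_mem.
rewrite mem_imfDg codom_f negbK => fi_g.
rewrite ltn_add2l index_cat mem_imfIg codom_f fi_g.
by rewrite index_mem mem_imfIg codom_f.
Qed.

Lemma coordg_subproof j : index (g j) imfUg - a < b + c.
Proof.
rewrite index_cat mem_imfDg codom_f andbF addKn -size_cat index_mem mem_cat.
by rewrite mem_imfIg mem_imgDf codom_f; case: (g j \in codom f).
Qed.

Definition coordf i : 'I_(a + b) := Ordinal (coordf_subproof i).
Definition coordg j : 'I_(b + c) := Ordinal (coordg_subproof j).

Lemma imfUg_enum_coordf i : imfUg_enum (incl_l (a + b) c (coordf i)) = f i.
Proof.
apply: imfUg_enum_index => //; rewrite !mem_cat mem_imfDg mem_imfIg codom_f.
by case: (f i \in codom g).
Qed.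

Lemma imfUg_enum_coordg j : imfUg_enum (incl_lr a b c (coordg j)) = g j.
Proof.
apply: imfUg_enum_index; last first.
  by rewrite /= subnKC // index_cat mem_imfDg codom_f andbF leq_addr.
rewrite !mem_cat mem_imfIg mem_imgDf codom_f !andbT.
by case: (g j \in codom f); rewrite ?orbT.
Qed.

Lemma imfIg_codomf j : tnth (in_tuple imfIg) j \in codom f.
Proof. by have := mem_tnth j (in_tuple imfIg); rewrite mem_imfIg => /andP[]. Qed.

Lemma imfIg_codomg j : tnth (in_tuple imfIg) j \in codom g.
Proof. by have := mem_tnth j (in_tuple imfIg); rewrite mem_imfIg => /andP[]. Qed.

Definition commonf j : 'I_m := iinv (imfIg_codomf j).
Definition commong j : 'I_m' := iinv (imfIg_codomg j).

Lemma commonfK j : f (commonf j) = tnth (in_tuple imfIg) j.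
Proof. exact: f_iinv. Qed.

Lemma commongK j : g (commong j) = tnth (in_tuple imfIg) j.
Proof. exact: f_iinv. Qed.

Lemma tnth_imfIg_inj : injective (tnth (in_tuple imfIg)).
Proof. exact/tuple_uniqP/filter_uniq/enum_uniq. Qed.

Lemma commonf_inj : injective commonf.
Proof. by move=> j j' /(congr1 f); rewrite !commonfK => /tnth_imfIg_inj. Qed.

Lemma commong_inj : injective commong.
Proof. by move=> j j' /(congr1 g); rewrite !commongK => /tnth_imfIg_inj. Qed.

Hypotheses (f_inj : injective f) (g_inj : injective g).

Lemma coordf_inj : injective coordf.
Proof. by move=> i i' E; apply: f_inj; rewrite -!imfUg_enum_coordf E. Qed.

Lemma coordg_inj : injective coordg.
Proof. by move=> j j' E; apply: g_inj; rewrite -!imfUg_enum_coordg E. Qed.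

Lemma coordf_commonf j : coordf (commonf j) = incl_r a b j.
Proof.
apply: (@iinj _ _ (incl_l (a + b) c)); apply: imfUg_enum_inj.
by rewrite imfUg_enum_coordf commonfK imfUg_enum_imfIg.
Qed.

Lemma coordg_commong j : coordg (commong j) = incl_l b c j.
Proof.
apply: (@iinj _ _ (incl_lr a b c)); apply: imfUg_enum_inj.
by rewrite imfUg_enum_coordg commongK incl_lr_incl_l imfUg_enum_imfIg.
Qed.

End ImagePartition.

Lemma imor_pair_decomposition m m' n (f : imor m n) (g : imor m' n) :
  exists l p r (e : imor (l + p + r) n)
    (al : imor m (l + p)) (be : imor m' (p + r))
    (u : imor p m) (v : imor p m'),
  [/\ forall i, f i = e (incl_l (l + p) r (al i)),
      forall j, g j = e (incl_lr l p r (be j)),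
      forall j, al (u j) = incl_r l p j
    & forall j, be (v j) = incl_l p r j].
Proof.
have [f_inj g_inj] := (@iinj _ _ f, @iinj _ _ g).
exists _, _, _, (IMor (@imfUg_enum_inj _ _ _ f g)),
  (IMor (@coordf_inj _ _ _ f g f_inj)), (IMor (@coordg_inj _ _ _ f g g_inj)),
  (IMor (@commonf_inj _ _ _ f g)), (IMor (@commong_inj _ _ _ f g)).
split=> /= x; rewrite ?imfUg_enum_coordf ?imfUg_enum_coordg //.
- exact: coordf_commonf.
- exact: coordg_commong.
Qed.

Section Amalgamation.

Variable X : Ispace.

Lemma XiM m n p k (g : imor n p) (f : imor m n) (x : Xo X m k) :
  Xi X g (Xi X f x) = Xi X (imor_comp g f) x.
Proof. by rewrite (Xi_comp (f := f) (g := g) (h := imor_comp g f)). Qed.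

Lemma eq_Xi m n k (f g : imor m n) (x : Xo X m k) :
  (forall i, f i = g i) -> Xi X f x = Xi X g x.
Proof.
move=> Efg; rewrite (Xi_comp (f := imor_id m) (g := g) (h := f)) //.
by rewrite (Xi_id (f := imor_id m)).
Qed.

Lemma Xi_square l m n k (c : Xo X m k) :
  Xi X (incl_l (l + m) n) (Xi X (incl_r l m) c) =
  Xi X (incl_lr l m n) (Xi X (incl_l m n) c).
Proof. by rewrite !XiM; apply: eq_Xi => i; apply: val_inj. Qed.

Definition amalgamable (p1 p2 n k : nat) (g1 : imor p1 n) (g2 : imor p2 n)
    (y1 : Xo X p1 k) (y2 : Xo X p2 k) : Prop :=
  exists q (u1 : imor q p1) (u2 : imor q p2) (c : Xo X q k),
    [/\ forall i, g1 (u1 i) = g2 (u2 i), Xi X u1 c = y1 & Xi X u2 c = y2].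

Definition amalgamation (n k : nat) : Prop :=
  forall p1 p2 (g1 : imor p1 n) (g2 : imor p2 n) (y1 : Xo X p1 k) y2,
    Xi X g1 y1 = Xi X g2 y2 -> amalgamable g1 g2 y1 y2.

Lemma amalgamable_refl p n k (g : imor p n) (y : Xo X p k) : amalgamable g g y y.
Proof.
exists p, (imor_id p), (imor_id p), y.
by split; rewrite ?(Xi_id (f := imor_id p)).
Qed.

Lemma amalgamable_sym p1 p2 n k (g1 : imor p1 n) (g2 : imor p2 n)
    (y1 : Xo X p1 k) (y2 : Xo X p2 k) :
  amalgamable g1 g2 y1 y2 -> amalgamable g2 g1 y2 y1.
Proof. by move=> [q [u1 [u2 [c [Eg E1 E2]]]]]; exists q, u2, u1, c; split. Qed.

Lemma amalgamable_trans p1 p2 p3 n k (g1 : imor p1 n) (g2 : imor p2 n)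
    (g3 : imor p3 n) (y1 : Xo X p1 k) (y2 : Xo X p2 k) (y3 : Xo X p3 k) :
  amalgamation p2 k -> amalgamable g1 g2 y1 y2 -> amalgamable g2 g3 y2 y3 ->
  amalgamable g1 g3 y1 y3.
Proof.
move=> amalg2 [q [u1 [u2 [c [Eg12 E1 E2]]]]] [q' [u2' [u3 [c' [Eg23 E2' E3]]]]].
have [r [w [w' [d [Ew Ed Ed']]]]] := amalg2 _ _ _ _ _ _ (etrans E2 (esym E2')).
exists r, (imor_comp u1 w), (imor_comp u3 w'), d; split.
- by move=> i /=; rewrite Eg12 Ew Eg23.
- by rewrite -XiM Ed.
- by rewrite -XiM Ed'.
Qed.

Lemma amalgamable_bij p1 p2 n k (g1 : imor p1 n) (g2 : imor p2 n)
    (y1 : Xo X p1 k) y2 :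
  bijective g1 -> Xi X g1 y1 = Xi X g2 y2 -> amalgamable g1 g2 y1 y2.
Proof.
case=> h g1K hK Ey; pose h' := IMor (can_inj hK).
have Xi_g1K (w : Xo X p1 k) : Xi X h' (Xi X g1 w) = w.
  by rewrite XiM (Xi_id (f := imor_comp h' g1)) //= => i; rewrite g1K.
exists p2, (imor_comp h' g2), (imor_id p2), y2; split=> [i /= | | ].
- by rewrite hK.
- by rewrite -XiM -Ey Xi_g1K.
- by rewrite (Xi_id (f := imor_id p2)).
Qed.

Lemma ltn_latch n k (a : latch_elt X n k) : le_m a < n.
Proof. exact: ltn_nonbij_imor (@le_nonIso _ _ _ a). Qed.

Lemma latch_clos_amalgamable n k (a b : latch_elt X n k) :
  (forall p, p < n -> amalgamation p k) ->
  clos_refl_sym_trans _ (@latch_rel X n k) a b ->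
  amalgamable (le_f a) (le_f b) (le_x a) (le_x b).
Proof.
move=> amalg_lt; elim=> {a b} [a b [h [Eh Ex]] | a | a b _ | a b d _ IHab _ IHbd].
- exists (le_m a), (imor_id _), h, (le_x a).
  by split=> //; rewrite (Xi_id (f := imor_id _)).
- exact: amalgamable_refl.
- exact: amalgamable_sym.
- exact: amalgamable_trans (amalg_lt _ (ltn_latch b)) IHab IHbd.
Qed.

Lemma flat_amalgamation : flat X -> forall n k, amalgamation n k.
Proof.
move=> flatX n k; elim/ltn_ind: n => n IHn p1 p2 g1 g2 y1 y2 Ey.
have [bij1 | nbij1] := classic (bijective g1); first exact: amalgamable_bij.
have [bij2 | nbij2] := classic (bijective g2).
  exact/amalgamable_sym/amalgamable_bij.
exact: latch_clos_amalgamable IHn (flatX n k (LE nbij1 y1) (LE nbij2 y2) Ey).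
Qed.

(* An amalgam of two latching representatives lives at a smaller object, so
   it is itself a representative, related by [latch_rel] to both. *)
Lemma amalgamation_flat : (forall n k, amalgamation n k) -> flat X.
Proof.
move=> amalgX n k a b Eab.
have [q [u [v [c [Euv Ea Eb]]]]] := amalgX n k _ _ _ _ _ _ Eab.
have lt_qn : q < n.
  apply: leq_ltn_trans (ltn_latch a).
  by have := leq_card _ (@iinj _ _ u); rewrite !card_ord.
pose d := LE (@ltn_nonbij _ _ (imor_comp (le_f a) u) lt_qn) c.
apply: (rst_trans _ _ _ d); first by apply/rst_sym/rst_step; exists u.
by apply: rst_step; exists v; split=> //= i; rewrite Euv.
Qed.

Lemma amalgamation_Xi_inj m n k (f : imor m n) :
  amalgamation n k -> injective (Xi X (k := k) f).
Proof.
move=> amalg x y /amalg [q [u [v [c [Euv <- <-]]]]].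
by apply: eq_Xi => i; apply: (@iinj _ _ f).
Qed.

Lemma amalgamation_square_meet l m n k (z : Xo X (l + m + n) k) :
  amalgamation (l + m + n) k ->
  (exists a, Xi X (incl_l (l + m) n) a = z) ->
  (exists b, Xi X (incl_lr l m n) b = z) ->
  exists c, Xi X (incl_l (l + m) n) (Xi X (incl_r l m) c) = z.
Proof.
move=> amalg [a <-] [b Eb].
have [q [u1 [u2 [c [Eu Ea _]]]]] := amalg _ _ _ _ _ _ (esym Eb).
have [w Ew] := incl_r_factor Eu.
exists (Xi X w c); rewrite -Ea !XiM; apply: eq_Xi => i.
exact: (congr1 (incl_l (l + m) n) (Ew i)).
Qed.

Lemma square_amalgamation :
  (forall m n k (f : imor m n), injective (Xi X (k := k) f)) ->
  (forall l m n k (z : Xo X (l + m + n) k),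
     (exists a, Xi X (incl_l (l + m) n) a = z) ->
     (exists b, Xi X (incl_lr l m n) b = z) ->
     exists c, Xi X (incl_l (l + m) n) (Xi X (incl_r l m) c) = z) ->
  forall n k, amalgamation n k.
Proof.
move=> Xi_inj square_meet n k p1 p2 f g x y Exy.
have [l [p [r [e [al [be [u [v [Ef Eg Eu Ev]]]]]]]]] :=
  imor_pair_decomposition f g.
pose z := Xi X (incl_l (l + p) r) (Xi X al x).
have Efx : Xi X f x = Xi X e z by rewrite /z !XiM; apply: eq_Xi; exact: Ef.
have Egy : Xi X g y = Xi X e (Xi X (incl_lr l p r) (Xi X be y)).
  by rewrite !XiM; apply: eq_Xi; exact: Eg.
have Ez : Xi X (incl_lr l p r) (Xi X be y) = z.
  by apply: (Xi_inj _ _ _ e); rewrite -Egy -Efx.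
have [c Ec] := square_meet _ _ _ _ z (ex_intro _ _ erefl) (ex_intro _ _ Ez).
have Ecx : Xi X (incl_r l p) c = Xi X al x by apply: Xi_inj Ec.
exists p, u, v, c; split.
- by move=> j; rewrite Ef Eg Eu Ev incl_lr_incl_l.
- by apply: (Xi_inj _ _ _ al); rewrite XiM -Ecx; apply: eq_Xi; exact: Eu.
- apply: (Xi_inj _ _ _ be); apply: (Xi_inj _ _ _ (incl_lr l p r)).
  have Evc : Xi X be (Xi X v c) = Xi X (incl_l p r) c.
    by rewrite XiM; apply: eq_Xi; exact: Ev.
  by rewrite Evc -Xi_square Ec Ez.
Qed.

End Amalgamation.

Theorem proposition3p9 (X : Ispace) :
  flat X <->
  ((forall m n k (f : imor m n), injective (@Xi X m n k f)) /\
   (forall l m n k (z : Xo X (l + m + n) k),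
      ((exists a : Xo X (l + m) k, Xi X (incl_l (l + m) n) a = z) /\
       (exists b : Xo X (m + n) k, Xi X (incl_lr l m n) b = z)) <->
      (exists c : Xo X m k,
         Xi X (incl_l (l + m) n) (Xi X (incl_r l m) c) = z))).
Proof.
split=> [flatX | [Xi_inj square]].
  have amalgX := flat_amalgamation flatX.
  split=> [m n k f | l m n k z]; first exact: amalgamation_Xi_inj.
  split=> [[Ea Eb] | [c <-]]; first exact: amalgamation_square_meet.
  split; first by exists (Xi X (incl_r l m) c).
  by exists (Xi X (incl_l m n) c); rewrite Xi_square.
apply/amalgamation_flat/square_amalgamation => // l m n k z Ea Eb.
exact: (proj1 (square l m n k z) (conj Ea Eb)).
Qed.
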